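(* Let $n\ge 2$ be an integer. For $\alpha,\beta\in\{0,1,\ldots,2^n-1\}$ define $f_{\alpha,\beta}:\{0,\ldots,2^n-1\}\to\{0,\ldots,2^n-1\}$ by $f_{\alpha,\beta}(x)=\big((\alpha+x)\bmod 2^n\big)\oplus\big((\beta+x)\bmod 2^n\big)$. Call a finite set $Q$ of pairs $(\alpha,\beta)$ a determining set if for all $x,x'\in\{0,\ldots,2^n-1\}$, the condition $f_{\alpha,\beta}(x)=f_{\alpha,\beta}(x')$ for every $(\alpha,\beta)\in Q$ implies $x\equiv x'\pmod{2^{n-1}}$. Then the minimum cardinality of a determining set is $1$ if $n=2$, and $2$ if $n>2$.
   Context: $\oplus$ denotes bitwise exclusive OR (XOR) of the binary representations of non-negative integers. A determining set is one whose query values $f_{\alpha,\beta}(x)$ recover $x$ modulo $2^{n-1}$ uniquely (the most significant bit of $x$ cannot be recovered in general, since $((\alpha+(x\oplus 2^{n-1}))\bmod 2^n)=((\alpha+x)\bmod 2^n)\oplus 2^{n-1}$). *)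

From mathcomp Require Import all_boot.
From Stdlib Require Import PeanoNat.
Set Implicit Arguments. Unset Strict Implicit. Unset Printing Implicit Defensive.

Definition fab (n a b x : nat) : nat :=
  Nat.lxor ((a + x) %% 2 ^ n) ((b + x) %% 2 ^ n).

Definition query (n : nat) := ('I_(2 ^ n) * 'I_(2 ^ n))%type.

Definition determining (n : nat) (Q : {set query n}) : Prop :=
  forall x x' : 'I_(2 ^ n),
    (forall q, q \in Q -> fab n q.1 q.2 x = fab n q.1 q.2 x') ->
    x = x' %[mod 2 ^ (n - 1)].

From Stdlib Require Import PeanoNat Lia.
From mathcomp Require Import all_boot zify.

Set Implicit Arguments.
Unset Strict Implicit.
Unset Printing Implicit Defensive.

(* Bit j of f_{0,d}(x) is bit j of d xor the carry into position j of d + x,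
   so the query (0, d) reveals all these carries.  Take d with 3 d = 1 modulo
   2^(n-1).  Since d mod 2^(i+1) lies near one or two thirds of 2^(i+1), the
   carries of d and of -d into position i + 1 together tell x mod 2^(i+1) apart
   from x + 2^i; this recovers x mod 2^(n-1) bit by bit (for n = 2 the query
   (0, d) alone suffices).  Conversely, a single query (a, b) confuses x with
   x' = -1 - a - b - x mod 2^n: a + x' and b + x' are the bitwise complements
   of b + x and a + x, so the XOR is unchanged, and for n > 2 one of x = 0, 1
   has x' different from x modulo 2^(n-1). *)

Lemma powE (a n : nat) : Nat.pow a n = a ^ n.
Proof. by elim: n => [|n IH] //=; rewrite expnS IH. Qed.

Lemma divE (a b : nat) : 0 < b -> Nat.div a b = a %/ b.
Proof.
move=> hb; apply/esym/(Nat.div_unique _ _ _ (a %% b)); first by apply/ltP; rewrite ltn_mod.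
by rewrite {1}(divn_eq a b) mulnC.
Qed.

Lemma modE (a b : nat) : 0 < b -> Nat.modulo a b = a %% b.
Proof.
move=> hb; have := Nat.div_mod_eq a b.
rewrite divE // {1}(divn_eq a b); lia.
Qed.

Lemma testbitE (a j : nat) : Nat.testbit a j = odd (a %/ 2 ^ j).
Proof.
have := Nat.testbit_spec' a j.
rewrite powE divE ?expn_gt0 // modE // modn2.
by case: (Nat.testbit a j); case: odd.
Qed.

Lemma fabE (n a b x : nat) :
  fab n a b x = Nat.lxor ((a + x) %% 2 ^ n) ((b + x) %% 2 ^ n).
Proof. by rewrite /fab powE. Qed.

Definition carry (d x j : nat) : bool := 2 ^ j <= d %% 2 ^ j + x %% 2 ^ j.

Lemma testbitD (d x j : nat) :
  Nat.testbit (d + x) j = Nat.testbit d j (+) Nat.testbit x j (+) carry d x j.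
Proof. by rewrite !testbitE divnD ?expn_gt0 // !oddD oddb. Qed.

Lemma testbit_fab0 (n d x j : nat) : x < 2 ^ n -> j < n ->
  Nat.testbit (fab n 0 d x) j = Nat.testbit d j (+) carry d x j.
Proof.
move=> hx hj.
have bit_mod m : Nat.testbit (m %% 2 ^ n) j = Nat.testbit m j.
  by rewrite -modE ?expn_gt0 // -powE Nat.mod_pow2_bits_low //; apply/ltP.
rewrite fabE add0n (modn_small hx) Nat.lxor_spec bit_mod testbitD.
by case: (Nat.testbit x j); case: (Nat.testbit d j); case: carry.
Qed.

Lemma carry_eq_of_fab0_eq (n d x x' j : nat) : x < 2 ^ n -> x' < 2 ^ n -> j < n ->
  fab n 0 d x = fab n 0 d x' -> carry d x j = carry d x' j.
Proof.
move=> hx hx' hj e.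
by apply: (@addbI (Nat.testbit d j)); rewrite -(testbit_fab0 d hx hj) -(testbit_fab0 d hx' hj) e.
Qed.

Lemma modn_double_cases (K u v : nat) : u < 2 * K -> v < 2 * K -> u %% K = v %% K ->
  [\/ u = v, u < K /\ v = u + K | v < K /\ u = v + K].
Proof.
move=> hu hv e.
have hK : 0 < K by lia.
have qu : u %/ K < 2 by rewrite ltn_divLR.
have qv : v %/ K < 2 by rewrite ltn_divLR.
have rK : u %% K < K by rewrite ltn_mod.
move: (divn_eq u K) (divn_eq v K); rewrite -e.
case: (u %/ K) qu => [|[|]] // _; case: (v %/ K) qv => [|[|]] // _ eu ev;
  rewrite eu ev; [apply: Or31 | apply: Or32 | apply: Or33 | apply: Or31]; lia.
Qed.

Lemma inv3_mod_cases (K d : nat) : 1 < K -> 3 * d = 1 %[mod K] ->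
  3 * (d %% K) = K + 1 \/ 3 * (d %% K) = 2 * K + 1.
Proof.
move=> hK hd.
have r3 : 3 * (d %% K) %% K = 1 by rewrite modnMmr hd modn_small.
have : 3 * (d %% K) %/ K < 3 by rewrite ltn_divLR ?ltn_pmul2l ?ltn_mod; lia.
move: (divn_eq (3 * (d %% K)) K); rewrite r3.
case: (_ %/ K) => [|[|[|]]] //=; lia.
Qed.

Lemma modnB_dvd (N K d : nat) : 0 < K -> K %| N -> d <= N -> 0 < d %% K ->
  (N - d) %% K = K - d %% K.
Proof.
move=> hK hKN hd hdK.
by rewrite modnB // (eqP hKN) hdK mul1n addn0.
Qed.

Lemma exists_inv3_mod (M : nat) : 1 < M -> ~~ (3 %| M) ->
  exists2 d, 0 < d < M & 3 * d = 1 %[mod M].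
Proof.
rewrite /dvdn => hM; move: (divn_eq M 3) (ltn_mod M 3).
case: (M %% 3) => [|[|[|]]] //= eM _ _.
- exists (2 * (M %/ 3) + 1); first lia.
  by rewrite (_ : 3 * _ = 2 * M + 1) ?modnMDl //; lia.
- exists (M %/ 3 + 1); first lia.
  by rewrite (_ : 3 * _ = 1 * M + 1) ?modnMDl //; lia.
Qed.

(* The carry of D separates u from u + K exactly for u in [K - D, 2K - D), and
   that of 2K - D for u in [D - K, D); these ranges cover [0, K) when D is
   about 2K/3 or 4K/3, except that for K = 1 the first range is already all of
   [0, 1). *)
Lemma carries_separate (K u D : nat) : u < K ->
  (3 * D = 2 * K + 1 \/ 3 * D = 4 * K + 1) ->
  (2 * K <= D + u) = (2 * K <= D + (u + K)) ->
  (1 < K -> (2 * K <= 2 * K - D + u) = (2 * K <= 2 * K - D + (u + K))) -> False.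
Proof. move=> *; lia. Qed.

Lemma carry_lift (K u v D : nat) : u < 2 * K -> v < 2 * K -> u %% K = v %% K ->
  (3 * D = 2 * K + 1 \/ 3 * D = 4 * K + 1) ->
  (2 * K <= D + u) = (2 * K <= D + v) ->
  (1 < K -> (2 * K <= 2 * K - D + u) = (2 * K <= 2 * K - D + v)) -> u = v.
Proof.
move=> hu hv /(modn_double_cases hu hv) [//|[hu' ->]|[hv' ->]] hD c1 c2; exfalso.
- exact: carries_separate hu' hD c1 c2.
- by apply: carries_separate hv' hD (esym c1) (fun hK => esym (c2 hK)).
Qed.

Lemma carries_determine (n d x x' : nat) : d <= 2 ^ n -> 3 * d = 1 %[mod 2 ^ (n - 1)] ->
  (forall j, j < n -> carry d x j = carry d x' j) ->
  (forall j, 1 < j < n -> carry (2 ^ n - d) x j = carry (2 ^ n - d) x' j) ->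
  x = x' %[mod 2 ^ (n - 1)].
Proof.
move=> hdN hd cd ce.
suff : forall i, i <= n - 1 -> x = x' %[mod 2 ^ i] by apply.
elim=> [|i IH] hi; first by rewrite !modn1.
have hin : i.+1 < n by clear -hi; lia.
set K := 2 ^ i.+1.
have K2 : K = 2 * 2 ^ i by rewrite /K expnS.
have hK1 : 1 < K by rewrite /K -{1}(expn0 2) ltn_exp2l.
have hdK : 3 * d = 1 %[mod K].
  by rewrite -(@modn_dvdm _ (3 * d) _ (dvdn_exp2l 2 hi)) hd modn_dvdm ?dvdn_exp2l.
have hD := inv3_mod_cases hK1 hdK.
have hE : (2 ^ n - d) %% K = K - d %% K.
  by apply: modnB_dvd; rewrite ?dvdn_exp2l ?(ltnW hin) //; clear -hD; lia.
apply: (@carry_lift (2 ^ i) _ _ (d %% K)); rewrite -?K2 ?ltn_mod ?expn_gt0 //.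
- have Ki : 2 ^ i %| K by rewrite dvdn_exp2l.
  by rewrite (modn_dvdm x Ki) (modn_dvdm x' Ki) IH // ltnW.
- by move: hD; rewrite K2; clear; lia.
- exact: cd hin.
- move=> hi1; rewrite -hE; apply: ce; rewrite hin andbT ltnS lt0n.
  by apply: contraTneq hi1 => ->.
Qed.

Lemma lxor_complement (n p q : nat) : p < 2 ^ n -> q < 2 ^ n ->
  Nat.lxor (2 ^ n - 1 - p) (2 ^ n - 1 - q) = Nat.lxor p q.
Proof.
case: n => [|n] hp hq; first by move: hp hq; rewrite !ltnS !leqn0 => /eqP-> /eqP->.
have lnotE r : r < 2 ^ n.+1 -> 2 ^ n.+1 - 1 - r = Nat.lnot r n.+1.
  move=> hr; rewrite Nat.lnot_sub_low ?Nat.ones_equiv ?powE ?subn1 //.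
  have [->|r_gt0] := posnP r; first exact/ltP.
  by apply/(Nat.log2_lt_pow2 _ _ (ltP r_gt0)); rewrite powE; apply/ltP.
by rewrite !lnotE // Nat.lxor_lnot_lnot.
Qed.

Lemma modn_compl (N u v : nat) : 0 < N -> u + v + 1 = 0 %[mod N] ->
  u %% N = N - 1 - v %% N.
Proof.
move=> hN huv.
have : N %| u %% N + v %% N + 1.
  by rewrite /dvdn -addnA modnDml addnCA modnDml addnCA addnA huv mod0n.
case/dvdnP=> k hk.
have := ltn_mod u N; have := ltn_mod v N; rewrite hN => hu hv.
case: k hk => [|[|k]] hk; lia.
Qed.

(* The x' with a + x' = -1 - (b + x) modulo 2^n; the offset 3 * 2^n keeps the
   truncated subtraction exact for a, b, x < 2^n. *)
Definition mirror (n a b x : nat) : nat := (3 * 2 ^ n - 1 - a - b - x) %% 2 ^ n.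

Lemma fab_mirror (n a b x : nat) : a < 2 ^ n -> b < 2 ^ n -> x < 2 ^ n ->
  fab n a b (mirror n a b x) = fab n a b x.
Proof.
move=> ha hb hx; have hN : 0 < 2 ^ n by rewrite expn_gt0.
have mirrorD c c' : c + c' = a + b ->
    (c + mirror n a b x) %% 2 ^ n = 2 ^ n - 1 - (c' + x) %% 2 ^ n.
  move=> e; rewrite /mirror modnDmr; apply: modn_compl => //.
  by rewrite (_ : _ + _ + 1 = 3 * 2 ^ n) ?modnMl ?mod0n //; lia.
rewrite !fabE (mirrorD a b) // (mirrorD b a (addnC b a)).
by rewrite lxor_complement ?ltn_mod // Nat.lxor_comm.
Qed.

Lemma mirror_not_congr (n a b : nat) : 2 < n -> a < 2 ^ n -> b < 2 ^ n ->
  exists2 x, x < 2 & x != mirror n a b x %[mod 2 ^ (n - 1)].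
Proof.
move=> hn ha hb; set M := 2 ^ (n - 1).
have eN : 2 ^ n = 2 * M by rewrite /M -expnS subn1 prednK // ltnW // ltnW.
have hM : 4 <= M by rewrite /M -[4]/(2 ^ 2) leq_exp2l // ltn_subRL addn1.
have congr_dvd x : x < 2 -> x = mirror n a b x %[mod M] -> M %| 2 * x + a + b + 1.
  have MN : M %| 2 ^ n by rewrite eN dvdn_mull.
  move=> hx; rewrite /mirror (modn_dvdm _ MN); set W := _ - x.
  have hW : 2 * x + a + b + 1 + W = 6 * M + x by rewrite /W; clear -ha hb hx eN; lia.
  move=> eW; have /eqP : 2 * x + a + b + 1 + W = 0 + W %[mod M] by rewrite hW modnMDl eW.
  by rewrite eqn_modDr mod0n.
have [x0 | c0] := eqVneq (0 %% M) (mirror n a b 0 %% M); last by exists 0.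
have [x1 | c1] := eqVneq (1 %% M) (mirror n a b 1 %% M); last by exists 1.
have /(dvdn_leq (isT : 0 < 2)) : M %| 2.
  rewrite -(dvdn_addr 2 (congr_dvd 0 isT x0)) (_ : _ + 2 = 2 * 1 + a + b + 1).
    exact: congr_dvd.
  by clear; lia.
by clear -hM; lia.
Qed.

Lemma determiningP (n : nat) (Q : {set query n}) :
  determining Q <->
  (forall x x', x < 2 ^ n -> x' < 2 ^ n ->
     (forall q, q \in Q -> fab n q.1 q.2 x = fab n q.1 q.2 x') ->
     x = x' %[mod 2 ^ (n - 1)]).
Proof.
split=> [det x x' hx hx' | det x x'].
- rewrite -powE in hx hx'; rewrite -powE; exact: (det (Ordinal hx) (Ordinal hx')).
- by rewrite [in X in _ = _ %[mod X]]powE; apply: det; rewrite -powE.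
Qed.

Lemma determining_of_inv3 (n : nat) (Q : {set query n}) (z d e : 'I_(Nat.pow 2 n)) :
  z = 0 :> nat -> 3 * d = 1 %[mod 2 ^ (n - 1)] -> e = 2 ^ n - d :> nat ->
  (z, d) \in Q -> (2 < n -> (z, e) \in Q) -> determining Q.
Proof.
move=> z0 hd he Qd Qe; apply/determiningP => x x' hx hx' det.
have hdN : d <= 2 ^ n by rewrite -powE ltnW.
apply: carries_determine hdN hd _ _ => [j hj | j /andP[hj1 hjn]].
- by apply: (carry_eq_of_fab0_eq hx hx' hj); have /= := det _ Qd; rewrite z0.
- rewrite -he; apply: (carry_eq_of_fab0_eq hx hx' hjn).
  by have /= := det _ (Qe (leq_ltn_trans hj1 hjn)); rewrite z0.
Qed.

Lemma determining_card_gt0 (n : nat) (Q : {set query n}) :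
  1 < n -> determining Q -> 0 < #|Q|.
Proof.
move=> hn /determiningP det; rewrite card_gt0; apply/negP => /eqP Q0.
have hM : 1 < 2 ^ (n - 1) by rewrite -{1}(expn0 2) ltn_exp2l // subn_gt0.
have hN : 1 < 2 ^ n by rewrite -{1}(expn0 2) ltn_exp2l // ltnW.
suff : 0 = 1 %[mod 2 ^ (n - 1)] by rewrite mod0n modn_small.
by apply: det (ltnW hN) hN _ => q; rewrite Q0 inE.
Qed.

Lemma determining_card_gt1 (n : nat) (Q : {set query n}) :
  2 < n -> determining Q -> 1 < #|Q|.
Proof.
move=> hn detQ; have Q_gt0 := determining_card_gt0 (ltnW hn) detQ.
rewrite ltnNge; apply/negP => Q_le1.
move: detQ; have /cards1P[[a b] ->] : #|Q| == 1 by rewrite eqn_leq Q_le1.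
move/determiningP => det.
have ha : a < 2 ^ n by rewrite -powE.
have hb : b < 2 ^ n by rewrite -powE.
have [x hx ncongr] := mirror_not_congr hn ha hb.
have hN : 1 < 2 ^ n by rewrite -{1}(expn0 2) ltn_exp2l // (ltnW (ltnW hn)).
apply: (negP ncongr); apply/eqP/det; rewrite ?ltn_mod ?expn_gt0 ?(leq_trans hx hN) //.
by move=> q /set1P -> /=; rewrite fab_mirror // (leq_trans hx hN).
Qed.

Theorem proposition1 (n : nat) (hn : 2 <= n) :
  let m := if n == 2 then 1 else 2 in
  (exists Q : {set query n}, determining Q /\ #|Q| = m) /\
  (forall Q : {set query n}, determining Q -> m <= #|Q|).
Proof.
move=> m; set M := 2 ^ (n - 1).
have hM : 1 < M by rewrite /M -{1}(expn0 2) ltn_exp2l // subn_gt0.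
have [d /andP[d_gt0 d_lt] hd] := exists_inv3_mod hM (negbT (Euclid_dvdX 2 _ (isT : prime 3))).
have eN : 2 ^ n = M + M by rewrite addnn -mul2n /M -expnS subn1 prednK // ltnW.
have hz : 0 < Nat.pow 2 n by rewrite powE expn_gt0.
have hd_lt : d < Nat.pow 2 n by rewrite powE eN ltn_addr.
have he_lt : 2 ^ n - d < Nat.pow 2 n by rewrite powE ltn_subrL d_gt0 expn_gt0.
pose z := Ordinal hz; pose od := Ordinal hd_lt; pose oe := Ordinal he_lt.
have detQ (Q : {set query n}) : (z, od) \in Q -> (2 < n -> (z, oe) \in Q) -> determining Q.
  exact: (@determining_of_inv3 n Q z od oe).
split; rewrite /m; case: eqVneq => [n2|n2].
- exists [set (z, od)]; rewrite cards1; split=> //.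
  by apply: detQ; rewrite ?set11 // [in X in X -> _]n2.
- exists [set (z, od); (z, oe)]; split; first by apply: detQ; rewrite !inE eqxx ?orbT.
  rewrite cards2 xpair_eqE eqxx /= -val_eqE /=.
  suff /negbTE -> : d != 2 ^ n - d by [].
  by rewrite neq_ltn eN; apply/orP; left; clear -d_lt; lia.
- by move=> Q /determining_card_gt0 ->.
- move=> Q; apply: determining_card_gt1.
  by rewrite ltn_neqAle eq_sym n2.
Qed.
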